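(* Let $X$ satisfy assumptions (A) described in the context, with Lévy density $\nu$. Let $w\in\mathbb{R}^d$, $r\in(0,2]$, $B=B(w,r)$. Let $f:\mathbb{R}^d\to[0,\infty)$ be measurable with $\int_{\mathbb{R}^d}f(y)(\nu(y)\wedge1)\,dy<\infty$, and for $y\in B$ put $g(y)=\int_{B^c}f(z)\nu(y-z)\,dz$. Then $g$ is bounded on $B(w,r/2)$ and $$|g(y)-g(w)|\le c\,\frac{(g(w)\wedge g(y))\,|y-w|}{r},\qquad y\in B(w,r/2).$$ Also $g(w)\le c\,g(y)$ for $y\in B(w,r/2)$. Here $c$ depends only on $d,a_1,a_2$.
   Context: Assumptions (A): (H0) $X$ is a pure-jump isotropic Lévy process in $\mathbb{R}^d$ whose Lévy measure is infinite with density $\nu(x)=\nu(|x|)$. (H1) $\nu(r)$ is nonincreasing, absolutely continuous, $-\nu'(r)/r$ nonincreasing (with $\nu(r)=-\int_r^\infty\nu'(\rho)d\rho$), and for some $a_1$: $\nu(r)\le a_1\nu(r+1)$ for $r\ge1$, $\nu(r)\le a_1\nu(2r)$ for $0<r\le1$. (H2) There is $a_2$ such that for every $x_0$, $r\in(0,1]$ and every $h\ge0$ on $\mathbb{R}^d$ harmonic in $B(x_0,r)$, $\sup_{B(x_0,r/2)}h\le a_2\inf_{B(x_0,r/2)}h$ (a Borel $f$ is harmonic in open $D$ if $f(x)=E^xf(X_{\tau_B})$, absolutely convergent, for $x\in B$, for all bounded open $B$ with $\overline B\subset D$, $\tau_B=\inf\{t>0:X_t\notin B\}$). Throughout, unspecified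 constants $c$ depend only on $d,a_1,a_2$. *)

From HB Require Import structures.
From mathcomp Require Import all_boot all_order all_algebra.
From mathcomp Require Import all_classical all_reals all_analysis.

Set Implicit Arguments.
Unset Strict Implicit.
Unset Printing Implicit Defensive.

Import Order.TTheory GRing.Theory Num.Theory.
Local Open Scope classical_set_scope.
Local Open Scope ring_scope.

(* Points of R^d are d.-tuples of reals; d.-tuple R carries the product
   (= Borel) sigma-algebra of mathcomp-analysis. *)
Section Euclid.
Variables (R : realType) (n : nat).
Implicit Types x y : n.-tuple R.

Definition tzero : n.-tuple R := [tuple (0:R) | i < n].
Definition tadd x y : n.-tuple R := [tuple tnth x i + tnth y i | i < n].
Definition tsub x y : n.-tuple R := [tuple tnth x i - tnth y i | i < n].
Definition tdot x y : R := \sum_(i < n) tnth x i * tnth y i.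
Definition tnorm x : R := Num.sqrt (tdot x x).
Definition eball x (r : R) : set (n.-tuple R) := [set y | tnorm (tsub y x) < r].

Definition topen (B : set (n.-tuple R)) :=
  forall x, B x -> exists2 e : R, 0 < e & eball x e `<=` B.
Definition tbounded (B : set (n.-tuple R)) := exists M : R, forall x, B x -> tnorm x <= M.
Definition tclosure (B : set (n.-tuple R)) : set (n.-tuple R) :=
  [set x | forall e : R, 0 < e -> exists2 y, B y & tnorm (tsub x y) < e].
End Euclid.

(* The d-dimensional Lebesgue integral, written as an iterated integral
   (by Tonelli this equals the integral w.r.t. d-dim Lebesgue measure for
   nonnegative measurable integrands, the only ones used below). *)
Fixpoint lebint (R : realType) (n : nat) : (n.-tuple R -> \bar R) -> \bar R :=
  match n return (n.-tuple R -> \bar R) -> \bar R with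
  | 0 => fun F => F [tuple]
  | n'.+1 => fun F =>
      (\int[@lebesgue_measure R]_(x in [set: R])
          lebint (fun t : n'.-tuple R => F (cons_tuple x t)))%E
  end.

Definition levy_dens (R : realType) (n : nat) (nu : R -> R) (y : n.-tuple R) : R :=
  if tnorm y == 0 then 0 else nu (tnorm y).

Definition char_exp (R : realType) (n : nat) (nu : R -> R) (xi : n.-tuple R) : \bar R :=
  lebint (fun y : n.-tuple R => ((1 - cos (tdot xi y)) * levy_dens nu y)%:E).

Section Process.
Context (R : realType) (n : nat) (dO : measure_display) (Omega : measurableType dO)
        (P : probability Omega R) (X : R -> Omega -> n.-tuple R).

(* Pure jump + symmetric Levy measure: the
   characteristic function of X_t - X_s is exp(-(t-s) psi(xi)), with no
   Gaussian part and no drift. *)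
Definition is_levy_density (nu : R -> R) :=
  [/\ (forall r : R, 0 < r -> 0 <= nu r),
      (lebint (fun y : n.-tuple R => (Num.min 1 (tnorm y ^+ 2) * levy_dens nu y)%:E) < +oo)%E
        &
      (lebint (fun y : n.-tuple R => (levy_dens nu y)%:E) = +oo)%E
        ].

Definition cadlag :=
  forall w : Omega,
    (forall t : R, 0 <= t -> forall e : R, 0 < e -> exists2 del : R, 0 < del &
        forall s, t <= s < t + del -> tnorm (tsub (X s w) (X t w)) < e) /\
    (forall t : R, 0 < t -> exists l : n.-tuple R, forall e : R, 0 < e ->
        exists2 del : R, 0 < del &
        forall s, t - del < s < t -> tnorm (tsub (X s w) l) < e).

Definition indep_increments :=
  forall (k : nat) (t : nat -> R) (A : nat -> set (n.-tuple R)),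
    0 <= t 0%N -> (forall i, t i <= t i.+1) -> (forall i, measurable (A i)) ->
    P (\bigcap_(i in `I_k) [set w | A i (tsub (X (t i.+1) w) (X (t i) w))]) =
    (\prod_(i < k) fine (P [set w | A i (tsub (X (t i.+1) w) (X (t i) w))]))%:E.

Definition increments_law (nu : R -> R) :=
  forall (s t : R) (xi : n.-tuple R), 0 <= s -> s <= t ->
    (\int[P]_(w in [set: Omega]) (cos (tdot xi (tsub (X t w) (X s w))))%:E
       = (expR (- ((t - s) * fine (char_exp nu xi))))%:E)%E /\
    (\int[P]_(w in [set: Omega]) (sin (tdot xi (tsub (X t w) (X s w))))%:E = 0)%E.

Definition levy_process (nu : R -> R) :=
  [/\ is_levy_density nu,
      (forall w, X 0 w = @tzero R n),
      (forall t, measurable_fun [set: Omega] (X t)),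
      cadlag /\ indep_increments & increments_law nu].

Definition exit_time (x : n.-tuple R) (B : set (n.-tuple R)) (w : Omega) : \bar R :=
  ereal_inf [set t%:E | t in [set t : R | 0 < t /\ ~ B (tadd x (X t w))]].

(* f(X_{tau_B}) under P^x, with the convention f(cemetery) = 0 on {tau_B = oo} *)
Definition exit_val (f : n.-tuple R -> R) (x : n.-tuple R) (B : set (n.-tuple R))
    (w : Omega) : R :=
  match exit_time x B w with
  | EFin t => f (tadd x (X t w))
  | _ => 0
  end.

Definition harmonic (f : n.-tuple R -> R) (D : set (n.-tuple R)) :=
  measurable_fun [set: n.-tuple R] f /\
  forall B : set (n.-tuple R), topen B -> tbounded B -> tclosure B `<=` D ->
    forall x, B x ->
      (\int[P]_(w in [set: Omega]) (`|exit_val f x B w|)%:E < +oo)%E /\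
      ((f x)%:E = \int[P]_(w in [set: Omega]) (exit_val f x B w)%:E)%E.

(* (H2) scale-invariant Harnack inequality with constant a2
   (sup_{B(x0,r/2)} h <= a2 inf_{B(x0,r/2)} h, written pointwise) *)
Definition harnack (a2 : R) :=
  forall (x0 : n.-tuple R) (r : R), 0 < r <= 1 ->
    forall h : n.-tuple R -> R, (forall x, 0 <= h x) -> harmonic h (eball x0 r) ->
      forall y1 y2, eball x0 (r / 2) y1 -> eball x0 (r / 2) y2 -> h y1 <= a2 * h y2.
End Process.

Definition H1 (R : realType) (nu : R -> R) (a1 : R) :=
  [/\ (forall s t : R, 0 < s -> s <= t -> nu t <= nu s),
      (exists nu' : R -> R,
         (forall r : R, 0 < r ->
            (@lebesgue_measure R).-integrable `]r, +oo[ (fun x => (nu' x)%:E) /\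
            (nu r)%:E = (- \int[@lebesgue_measure R]_(x in `]r, +oo[) (nu' x)%:E)%E) /\
         (forall s t : R, 0 < s -> s <= t -> - nu' t / t <= - nu' s / s)),
      (forall r : R, 1 <= r -> nu r <= a1 * nu (r + 1)) &
      (forall r : R, 0 < r -> r <= 1 -> nu r <= a1 * nu (2 * r))].

Definition assumptionsA (R : realType) (n : nat) (dO : measure_display)
    (Omega : measurableType dO) (P : probability Omega R)
    (X : R -> Omega -> n.-tuple R) (nu : R -> R) (a1 a2 : R) :=
  [/\ levy_process P X nu, H1 nu a1 & harnack P X a2].

Definition gfun (R : realType) (n : nat) (nu : R -> R) (f : n.-tuple R -> R)
    (w : n.-tuple R) (r : R) (y : n.-tuple R) : \bar R :=
  lebint (fun z : n.-tuple R =>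
    (if `[< eball w r z >] then 0 else f z * levy_dens nu (tsub y z))%:E).

(* Only (H1) and the nonnegativity of [nu] are used (neither the Harnack
   inequality (H2) nor the measurability of [f]): the claims follow from a pointwise
   comparison of the kernels [nu (|w - z|)] and [nu (|y - z|)] for [z] outside
   [B(w, r)] and [y] in [B(w, r/2)].  Both distances are at least [r/2] and differ
   by at most [|y - w|], so it suffices that [nu] is log-Lipschitz at scale [r]:
   [nu a <= (1 + c |a - b| / r) nu b] for [a, b >= r/2], [|a - b| <= r/2].  This
   follows from (H1): since [- nu' u / u] is nonincreasing, [- nu' u] is at most
   [2 / min(u/2, 1)] times [nu (u - min(u/2, 1))], and three doubling steps of
   (H1) bring that back to [nu b].  Integrating against [f] gives
   [g w <= (1 + c |y - w| / r) g y] and symmetrically, and [g w < +oo] because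
   [nu (|w - z|) <= C min(nu (|z|), 1)] when [|w - z| >= r]. *)

From HB Require Import structures.
From mathcomp Require Import all_boot all_order all_algebra.
From mathcomp Require Import all_classical all_reals all_analysis.
From mathcomp Require Import ring lra measurable_realfun.
Import Order.TTheory GRing.Theory Num.Theory.
Local Open Scope classical_set_scope.
Local Open Scope ring_scope.
Set Implicit Arguments.
Unset Strict Implicit.
Unset Printing Implicit Defensive.

Lemma normB_le_mul_min (R : realFieldType) (a b t : R) : 0 <= a -> 0 <= b ->
  a <= (1 + t) * b -> b <= (1 + t) * a -> `|b - a| <= t * Num.min a b.
Proof.
move=> a0 b0 ab ba; case: (leP a b) => lab.
  by rewrite ger0_norm ?subr_ge0 //; lra.
by rewrite ler0_norm ?subr_le0 ?(ltW lab) //; lra.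
Qed.

Section EuclideanNorm.
Variables (R : realType) (n : nat).
Implicit Types x y z : n.-tuple R.

Lemma tdot_ge0 x : 0 <= tdot x x.
Proof. by apply: sumr_ge0 => i _; rewrite -expr2 sqr_ge0. Qed.

Lemma tnorm_ge0 x : 0 <= tnorm x.
Proof. exact: sqrtr_ge0. Qed.

Lemma tnorm_sqr x : tnorm x ^+ 2 = tdot x x.
Proof. by rewrite sqr_sqrtr // tdot_ge0. Qed.

(* Lagrange's identity:
   2 (|x|^2 |y|^2 - (x.y)^2) = \sum_(i,j) (x_i y_j - x_j y_i)^2. *)
Lemma tdot_sqr_le x y : tdot x y ^+ 2 <= tdot x x * tdot y y.
Proof.
pose F i j := tnth x i ^+ 2 * tnth y j ^+ 2
              - tnth x i * tnth y i * (tnth x j * tnth y j).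
have gapE : tdot x x * tdot y y - tdot x y ^+ 2 = \sum_i \sum_j F i j.
  rewrite /tdot expr2 !big_distrlr -sumrB; apply: eq_bigr => i _.
  by rewrite -sumrB; apply: eq_bigr => j _; rewrite /F !expr2.
have gap2E : (\sum_i \sum_j F i j) *+ 2 =
    \sum_i \sum_j (tnth x i * tnth y j - tnth x j * tnth y i) ^+ 2.
  rewrite mulr2n [X in _ + X]exchange_big -big_split; apply: eq_bigr => i _.
  rewrite -big_split; apply: eq_bigr => j _; rewrite /F /=; ring.
rewrite -subr_ge0 gapE -(pmulrn_lge0 _ (isT : (0 < 2)%N)) gap2E.
by do 2!apply: sumr_ge0 => ? _; rewrite sqr_ge0.
Qed.

Lemma tdot_le x y : tdot x y <= tnorm x * tnorm y.
Proof.
apply: le_trans (ler_norm _) _.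
rewrite -sqrtr_sqr /tnorm -sqrtrM ?tdot_ge0 // ler_sqrt ?mulr_ge0 ?tdot_ge0 //.
exact: tdot_sqr_le.
Qed.

Lemma ler_tnormD x y : tnorm (tadd x y) <= tnorm x + tnorm y.
Proof.
rewrite -(ler_pXn2r (isT : (0 < 2)%N)) ?nnegrE ?addr_ge0 ?tnorm_ge0 //.
have -> : tnorm (tadd x y) ^+ 2 = tdot x x + 2 * tdot x y + tdot y y.
  rewrite tnorm_sqr /tdot mulr_sumr -!big_split; apply: eq_bigr => i _.
  rewrite /= !tnth_mktuple; ring.
rewrite sqrrD -!tnorm_sqr mulr2n mulrDl mul1r; have := tdot_le x y; lra.
Qed.

Lemma tsub_tadd x y z : tsub x z = tadd (tsub x y) (tsub y z).
Proof. by apply: eq_from_tnth => i; rewrite !tnth_mktuple subrKA. Qed.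

Lemma tsubr0 x : tsub x (tzero R n) = x.
Proof. by apply: eq_from_tnth => i; rewrite !tnth_mktuple subr0. Qed.

Lemma tnorm_subxx x : tnorm (tsub x x) = 0.
Proof.
by rewrite /tnorm /tdot big1 ?sqrtr0 // => i _; rewrite tnth_mktuple subrr mul0r.
Qed.

Lemma tnorm_subC x y : tnorm (tsub x y) = tnorm (tsub y x).
Proof.
congr Num.sqrt; apply: eq_bigr => i _; rewrite !tnth_mktuple; ring.
Qed.

Lemma tnorm_sub_le x y z : tnorm (tsub x z) <= tnorm (tsub x y) + tnorm (tsub y z).
Proof. by rewrite (tsub_tadd x y z) ler_tnormD. Qed.

Lemma ler_dist_tnorm_sub x y z :
  `| tnorm (tsub x z) - tnorm (tsub y z) | <= tnorm (tsub x y).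
Proof.
have := tnorm_sub_le x y z; have := tnorm_sub_le y x z.
by rewrite (tnorm_subC y x) ler_norml; lra.
Qed.

Lemma eball_center x e : 0 < e -> eball x e x.
Proof. by rewrite /eball /= tnorm_subxx. Qed.

Lemma tnorm_eq0 x : tnorm x = 0 -> x = tzero R n.
Proof.
move=> /eqP; rewrite sqrtr_eq0 le_eqVlt ltNge tdot_ge0 orbF => /eqP x0.
apply: eq_from_tnth => i; rewrite tnth_mktuple; apply/eqP.
rewrite -sqrf_eq0 expr2; apply/eqP.
by apply: (psumr_eq0P _ x0) => // j _; rewrite -expr2 sqr_ge0.
Qed.

End EuclideanNorm.

(* No measurability is assumed below: the integral of a nonnegative function is
   the supremum of the integrals of its simple minorants ([ge0_integralTE]). *)
Section NonnegIntegral.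
Local Open Scope ereal_scope.
Import HBNNSimple.

Lemma ge0_le_integralT dT (T : measurableType dT) (R : realType)
    (mu : {measure set T -> \bar R}) (f g : T -> \bar R) :
  (forall x, 0 <= f x) -> (forall x, f x <= g x) ->
  \int[mu]_x f x <= \int[mu]_x g x.
Proof.
move=> f0 fg; have g0 x : 0 <= g x by exact: le_trans (f0 x) (fg x).
rewrite !ge0_integralTE //; apply: ereal_sup_le => _ [h hf <-].
by exists h => //= x; exact: le_trans (hf x) (fg x).
Qed.

Lemma ge0_integralZl_le dT (T : measurableType dT) (R : realType)
    (mu : {measure set T -> \bar R}) (f : T -> \bar R) (k : R) :
  (0 <= k)%R -> (forall x, 0 <= f x) ->
  \int[mu]_x (k%:E * f x) <= k%:E * \int[mu]_x f x.
Proof.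
move=> k0 f0; have [->|k_neq0] := eqVneq k 0%R.
  by rewrite mul0e integral0_eq // => x _; rewrite mul0e.
have kV0 : (0 <= k^-1)%R by rewrite invr_ge0.
rewrite !ge0_integralTE //; last by move=> x; rewrite mule_ge0.
apply: ge_ereal_sup => _ [h hf <-].
pose h' := scale_nnsfun h kV0.
have -> : NonNegSimpleFun.sort h = (cst k \* NonNegSimpleFun.sort h')%R.
  by apply: funext => x /=; rewrite mulrA mulfV // mul1r.
rewrite sintegralrM; apply: lee_wpmul2l; first by rewrite lee_fin.
apply: ereal_sup_ubound; exists h' => //= x.
rewrite EFinM; apply: le_trans (lee_wpmul2l _ (hf x)) _; first by rewrite lee_fin.
by rewrite muleA -EFinM mulVf // mul1e.
Qed.

Lemma ge0_le_integralT_but0 (R : realType) (f g : R -> \bar R) :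
  (forall x, 0 <= f x) -> (forall x, 0 <= g x) -> (forall x, x != 0%R -> f x <= g x) ->
  \int[@lebesgue_measure R]_x f x <= \int[@lebesgue_measure R]_x g x.
Proof.
move=> f0 g0 fg; rewrite [leLHS]ge0_integralTE //.
apply: ge_ereal_sup => _ [h hf <-].
have mh : measurable_fun [set: measurableTypeR R] h by [].
have -> : sintegral (@lebesgue_measure R) (NonNegSimpleFun.sort h) =
    \int[@lebesgue_measure R]_x (NonNegSimpleFun.sort h x)%:E.
  by rewrite integral_nnsfun // patch_setT.
rewrite -(@integral_setD1 _ _ 0%R); last 2 first.
- exact: measurableD.
- exact/measurable_EFinP/measurable_funTS.
rewrite integral_mkcond; apply: ge0_le_integralT.
  by move=> x; rewrite /patch; case: ifP => // _; rewrite lee_fin.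
move=> x; rewrite /patch; case: ifPn => [/set_mem [_ /eqP x0]|_]; last exact: g0.
exact: le_trans (hf x) (fg x x0).
Qed.

Lemma lebint_ge0 (R : realType) (n : nat) (F : n.-tuple R -> \bar R) :
  (forall x, 0 <= F x) -> 0 <= lebint F.
Proof.
elim: n F => [|n IHn] F F0 /=; first exact: F0.
by apply: integral_ge0 => x _; apply: IHn.
Qed.

Lemma le_lebint (R : realType) (n : nat) (F G : n.-tuple R -> \bar R) :
  (forall x, 0 <= F x) -> (forall x, F x <= G x) -> lebint F <= lebint G.
Proof.
elim: n F G => [|n IHn] F G F0 FG /=; first exact: FG.
apply: ge0_le_integralT => [x|x]; first exact: lebint_ge0.
exact: IHn.
Qed.

Lemma le_lebint_but0 (R : realType) (n : nat) (F G : n.+1.-tuple R -> \bar R) :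
  (forall x, 0 <= F x) -> (forall x, 0 <= G x) ->
  (forall x, x != tzero R n.+1 -> F x <= G x) -> lebint F <= lebint G.
Proof.
move=> F0 G0 FG /=; apply: ge0_le_integralT_but0 => [x|x|x x0].
- exact: lebint_ge0.
- exact: lebint_ge0.
apply: le_lebint => // t; apply: FG; apply: contra x0 => /eqP xt0.
by rewrite -(tnth0 x t) [[tuple of _]]xt0 tnth_mktuple.
Qed.

Lemma lebintZl_le (R : realType) (n : nat) (F : n.-tuple R -> \bar R) (k : R) :
  (0 <= k)%R -> (forall x, 0 <= F x) ->
  lebint (fun x => k%:E * F x) <= k%:E * lebint F.
Proof.
move=> k0; elim: n F => [|n IHn] F F0 //=.
apply: le_trans (ge0_integralZl_le _ k0 _); last by move=> x; exact: lebint_ge0.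
apply: ge0_le_integralT => x; last exact: IHn.
by apply: lebint_ge0 => t; rewrite mule_ge0.
Qed.

End NonnegIntegral.

Section RadialProfile.
Variables (R : realType) (nu nu' : R -> R) (a1 : R).
Local Notation mu := (@lebesgue_measure R).
Hypothesis nu_ge0 : forall r, 0 < r -> 0 <= nu r.
Hypothesis nu_nonincr : forall s t, 0 < s -> s <= t -> nu t <= nu s.
Hypothesis nu_le_shift1 : forall r, 1 <= r -> nu r <= a1 * nu (r + 1).
Hypothesis nu_le_double : forall r, 0 < r -> r <= 1 -> nu r <= a1 * nu (2 * r).
Hypothesis nu_integral : forall r : R, 0 < r ->
  mu.-integrable `]r, +oo[ (fun x => (nu' x)%:E) /\
  (nu r)%:E = (- \int[mu]_(x in `]r, +oo[) (nu' x)%:E)%E.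
Hypothesis nu'_div_nonincr :
  forall s t : R, 0 < s -> s <= t -> - nu' t / t <= - nu' s / s.

Local Notation K := (8 * `|a1| ^+ 3).

Let K_ge0 : 0 <= K. Proof. by rewrite mulr_ge0 ?exprn_ge0. Qed.

Lemma lebesgue_measure_itv_oc a b : a <= b -> mu `]a, b] = (b - a)%:E.
Proof.
move=> ab; rewrite lebesgue_measure_itv /= lte_fin.
case: ltP => [_|ba]; first by rewrite EFinB.
suff -> : b = a by rewrite subrr.
by apply/eqP; rewrite eq_le ba ab.
Qed.

Lemma Rintegral_itv_cst a b k : a <= b -> \int[mu]_(_ in `]a, b]) k = k * (b - a).
Proof.
move=> ab; rewrite Rintegral_cst //; congr (_ * _).
exact: (f_equal fine (lebesgue_measure_itv_oc ab)).
Qed.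

Lemma integrable_itv_cst a b k : a <= b -> mu.-integrable `]a, b] (EFin \o cst k).
Proof.
move=> ab; apply: measurable_bounded_integrable => //; last exact: bounded_cst.
have fin : (mu `]a, b] < +oo)%E by rewrite lebesgue_measure_itv_oc // ltry.
exact: fin.
Qed.

Lemma integrable_nu' a b : 0 < a -> mu.-integrable `]a, b] (EFin \o nu').
Proof.
move=> a0; apply: integrableS (nu_integral a0).1 => //.
by apply: subset_itvl; rewrite bnd_simp.
Qed.

Lemma nu_subE a b : 0 < a -> a <= b -> nu a - nu b = - \int[mu]_(x in `]a, b]) nu' x.
Proof.
move=> a0 ab.
have nuE r : 0 < r -> nu r = - \int[mu]_(x in `]r, +oo[) nu' x.
  by move=> r0; rewrite /Rintegral -fineN -(nu_integral r0).2.
rewrite (nuE _ a0) (nuE _ (lt_le_trans a0 ab)).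
have -> : `]a, +oo[%classic = `]a, b] `|` `]b, +oo[.
  by apply: itv_bndbnd_setU; rewrite bnd_simp.
rewrite Rintegral_setU //.
- ring.
- by rewrite -itv_bndbnd_setU ?bnd_simp //; exact: (nu_integral a0).1.
- apply/disj_setPS => x [/=]; rewrite !in_itv /= => /andP[_ xb] /andP[bx _].
  by move: (lt_le_trans bx xb); rewrite ltxx.
Qed.

Lemma nu_sub_le a b M : 0 < a -> a <= b ->
  (forall u, a < u -> u <= b -> - nu' u <= M) -> nu a - nu b <= M * (b - a).
Proof.
move=> a0 ab nu'M; rewrite nu_subE // lerNl -mulNr -Rintegral_itv_cst //.
apply: le_Rintegral => //; [exact: integrable_itv_cst | exact: integrable_nu' |].
by move=> u /=; rewrite in_itv /= lerNl => /andP[au ub]; apply: nu'M.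
Qed.

Lemma nu_sub_ge a b k : 0 < a -> a <= b ->
  (forall u, a < u -> u <= b -> k <= - nu' u) -> k * (b - a) <= nu a - nu b.
Proof.
move=> a0 ab nu'k; rewrite nu_subE // lerNr -mulNr -Rintegral_itv_cst //.
apply: le_Rintegral => //; [exact: integrable_nu' | exact: integrable_itv_cst |].
by move=> u /=; rewrite in_itv /= lerNr => /andP[au ub]; apply: nu'k.
Qed.

(* Since [- nu' u / u] is nonincreasing, [- nu' >= - nu' s / 2] on [(s - h, s]]. *)
Lemma neg_nu'_le s : 0 < s ->
  Num.min (s / 2) 1 / 2 * - nu' s <= nu (s - Num.min (s / 2) 1).
Proof.
move=> s0; set h := Num.min (s / 2) 1.
have h0 : 0 < h by rewrite lt_min ltr01 andbT divr_gt0.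
have hs : h <= s / 2 by rewrite ge_min lexx.
have sh0 : 0 < s - h by lra.
have [nu's_le0|nu's_gt0] := leP (- nu' s) 0.
  by apply: le_trans (nu_ge0 sh0); rewrite mulr_ge0_le0 // divr_ge0 // ltW.
set q := - nu' s / s.
have q0 : 0 < q by rewrite divr_gt0.
have nu'sE : - nu' s = q * s by rewrite /q mulrVK // unitfE gt_eqF.
have nu'_ge u : s - h < u -> u <= s -> (s - h) * q <= - nu' u.
  move=> hu us; have u0 : 0 < u by lra.
  have -> : - nu' u = u * (- nu' u / u) by rewrite mulrC mulrVK // unitfE gt_eqF.
  by apply: ler_pM => //; [lra | exact: ltW | lra | exact: nu'_div_nonincr].
have shs : s - h <= s by lra.
have := nu_sub_ge sh0 shs nu'_ge; have := nu_ge0 s0.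
have : 0 <= q * h * (s - h - s / 2) by apply: mulr_ge0; [apply: mulr_ge0; exact: ltW | lra].
rewrite nu'sE; nra.
Qed.

Lemma nu_le_step p : 0 < p -> nu p <= `|a1| * nu (p + Num.min p 1).
Proof.
move=> p0; have q0 : 0 < p + Num.min p 1 by rewrite addr_gt0 // lt_min p0 ltr01.
apply: le_trans (_ : a1 * nu (p + Num.min p 1) <= _); last first.
  by rewrite ler_wpM2r ?nu_ge0 ?ler_norm.
case: (leP p 1) => p1; last by apply: nu_le_shift1; rewrite ltW.
by rewrite -mulr2n -mulr_natl; apply: nu_le_double.
Qed.

Lemma nu_le_iter k p : 0 < p -> nu p <= `|a1| ^+ k * nu (p + k%:R * Num.min p 1).
Proof.
move=> p0; have m0 : 0 < Num.min p 1 by rewrite lt_min p0 ltr01.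
elim: k => [|k IHk]; first by rewrite expr0 mul1r mul0r addr0.
set q := p + k%:R * Num.min p 1.
have pq : p <= q by rewrite lerDl mulr_ge0 // ltW.
have q0 : 0 < q by apply: lt_le_trans pq.
apply: le_trans IHk _; rewrite exprSr -mulrA ler_wpM2l ?exprn_ge0 //.
apply: le_trans (nu_le_step q0) _; rewrite ler_wpM2l // nu_nonincr //.
  by apply: (lt_le_trans p0); rewrite lerDl mulr_ge0 // ltW.
rewrite /q mulrSr mulrDl mul1r -addrA lerD2l lerD2l.
by rewrite le_min !ge_min pq lexx orbT.
Qed.

Lemma nu_le_expn_mul k p t : 0 < p -> p <= t -> t <= p + k%:R * Num.min p 1 ->
  nu p <= `|a1| ^+ k * nu t.
Proof.
move=> p0 pt tp; apply: le_trans (nu_le_iter k p0) _.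
by rewrite ler_wpM2l ?exprn_ge0 // nu_nonincr // (lt_le_trans p0).
Qed.

(* The derivative bound [- nu' u <= (2 / h) nu (u - h)] of [neg_nu'_le], with
   [nu (u - h)] brought back to [nu b] by three doubling steps of length [>= r/4]. *)
Lemma nu_sub_le_scaled r a b : 0 < r -> r <= 2 -> r / 2 <= a -> a <= b -> b <= a + r / 2 ->
  nu a - nu b <= K * nu b / r * (b - a).
Proof.
move=> r0 r2 ra ab br; apply: nu_sub_le => [|//|u au ub]; first lra.
have u0 : 0 < u by lra.
set h := Num.min (u / 2) 1.
have hu : h <= u / 2 by rewrite ge_min lexx.
have h1 : h <= 1 by rewrite ge_min lexx orbT.
have hr : r / 4 <= h by rewrite le_min; apply/andP; split; lra.
have uh0 : 0 < u - h by lra.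
have a13 : 0 <= `|a1| ^+ 3 by rewrite exprn_ge0.
have nub : 0 <= nu b by apply: nu_ge0; lra.
have nu_uh : nu (u - h) <= `|a1| ^+ 3 * nu b.
  apply: nu_le_expn_mul => //; first lra.
  have m1 : h <= Num.min (u - h) 1 by rewrite le_min h1 andbT; lra.
  have m2 : r / 4 <= Num.min (u - h) 1 by rewrite le_min; apply/andP; split; lra.
  have -> : (3%:R : R) = 3 by []; lra.
have [nu'u_le0|nu'u_gt0] := leP (- nu' u) 0.
  by apply: le_trans nu'u_le0 _; rewrite divr_ge0 ?mulr_ge0 // ltW.
have := le_trans (neg_nu'_le u0) nu_uh; rewrite -/h ler_pdivlMr //; nra.
Qed.

Lemma nu_le_near r a b e : 0 < r -> r <= 2 -> r / 2 <= a -> r / 2 <= b ->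
  `|a - b| <= e -> e <= r / 2 -> nu a <= (1 + K * e / r) * nu b.
Proof.
move=> r0 r2 ra rb abe er.
have e0 : 0 <= e by apply: le_trans abe.
set c := K / r.
have c0 : 0 <= c by rewrite divr_ge0 // ltW.
have -> : K * e / r = c * e by rewrite /c; ring.
have nub : 0 <= nu b by apply: nu_ge0; lra.
case: (leP a b) => ab; last first.
  apply: le_trans (nu_nonincr _ (ltW ab)) _; first lra.
  by rewrite ler_peMl // lerDl mulr_ge0.
have bae : b - a <= e by apply: le_trans abe; rewrite distrC ler_norm.
have bar : b <= a + r / 2 by lra.
have := nu_sub_le_scaled r0 r2 ra ab bar.
have -> : K * nu b / r * (b - a) = c * nu b * (b - a) by rewrite /c; ring.
have : c * nu b * (b - a) <= c * nu b * e by rewrite ler_wpM2l // mulr_ge0.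
nra.
Qed.

Lemma nu_le_far r s t k : 0 < r -> r <= s -> 0 < t -> t <= s + k%:R * Num.min r 1 ->
  nu s <= (1 + `|a1| ^+ k + nu r) * Num.min (nu t) 1.
Proof.
move=> r0 rs t0 tsk; have s0 : 0 < s by apply: lt_le_trans rs.
have nur0 := nu_ge0 r0; have nut0 := nu_ge0 t0.
have a1k0 : 0 <= `|a1| ^+ k by rewrite exprn_ge0.
have nus_le : nu s <= (1 + `|a1| ^+ k) * nu t.
  case: (leP t s) => ts; first by apply: le_trans (nu_nonincr t0 ts) _; nra.
  have : nu s <= `|a1| ^+ k * nu t.
    apply: nu_le_expn_mul => //; first exact: ltW.
    apply: le_trans tsk _; rewrite lerD2l ler_wpM2l //.
    by rewrite le_min !ge_min rs lexx orbT.
  nra.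
have := nu_nonincr r0 rs; case: (leP (nu t) 1) => nut1; nra.
Qed.

Lemma levy_dens_ge0 m (x : m.-tuple R) : 0 <= levy_dens nu x.
Proof.
rewrite /levy_dens; case: ifPn => // x0; apply: nu_ge0.
by rewrite lt_neqAle eq_sym x0 tnorm_ge0.
Qed.

Lemma levy_densE m (x : m.-tuple R) : 0 < tnorm x -> levy_dens nu x = nu (tnorm x).
Proof. by move=> x0; rewrite /levy_dens gt_eqF. Qed.

Section JumpKernel.
Variables (n : nat) (w : n.+1.-tuple R) (r : R) (f : n.+1.-tuple R -> R).
Hypotheses (r_gt0 : 0 < r) (r_le2 : r <= 2) (f_ge0 : forall y, 0 <= f y).
Hypothesis f_int :
  (lebint (fun y : n.+1.-tuple R => (f y * Num.min (levy_dens nu y) 1)%:E) < +oo)%E.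

Lemma center_in_half_ball : eball w (r / 2) w.
Proof. exact/eball_center/divr_gt0. Qed.

Lemma tnorm_sub_ge_half x z : eball w (r / 2) x -> ~ eball w r z ->
  r / 2 <= tnorm (tsub x z).
Proof.
rewrite /eball /= => xw /negP; rewrite -leNgt => zw.
by have := tnorm_sub_le w x z; rewrite (tnorm_subC w x) (tnorm_subC w z); lra.
Qed.

Lemma levy_dens_le_near x1 x2 z : eball w (r / 2) x1 -> eball w (r / 2) x2 ->
  tnorm (tsub x1 x2) <= r / 2 -> ~ eball w r z ->
  levy_dens nu (tsub x1 z) <=
    (1 + K * tnorm (tsub x1 x2) / r) * levy_dens nu (tsub x2 z).
Proof.
move=> x1w x2w x12 zw.
have x1z := tnorm_sub_ge_half x1w zw; have x2z := tnorm_sub_ge_half x2w zw.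
have r2_gt0 : 0 < r / 2 by rewrite divr_gt0.
rewrite !levy_densE ?(lt_le_trans r2_gt0) //.
exact: nu_le_near (ler_dist_tnorm_sub _ _ _) x12.
Qed.

Local Notation g := (gfun nu f w r).

Lemma gfun_integrand_ge0 x z :
  (0 <= (if `[< eball w r z >] then 0 else f z * levy_dens nu (tsub x z))%:E)%E.
Proof. by case: asboolP => _ //; rewrite lee_fin mulr_ge0 ?levy_dens_ge0. Qed.

Lemma gfun_ge0 x : (0 <= g x)%E.
Proof. exact: lebint_ge0 (gfun_integrand_ge0 x). Qed.

Lemma gfun_le_near x1 x2 : eball w (r / 2) x1 -> eball w (r / 2) x2 ->
  tnorm (tsub x1 x2) <= r / 2 ->
  (g x1 <= (1 + K * tnorm (tsub x1 x2) / r)%:E * g x2)%E.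
Proof.
move=> x1w x2w x12; set c := 1 + _.
have c0 : 0 <= c by rewrite addr_ge0 // divr_ge0 ?mulr_ge0 ?tnorm_ge0 ?(ltW r_gt0).
apply: le_trans (lebintZl_le c0 (gfun_integrand_ge0 x2)).
apply: le_lebint => [|z]; first exact: gfun_integrand_ge0.
case: asboolP => zw; rewrite ?mule0 //.
by rewrite -EFinM lee_fin mulrCA ler_wpM2l // levy_dens_le_near.
Qed.

(* [nu (|w - z|)] is compared with [nu (|z|)] by [k] doubling steps of length at
   least [min r 1], where [k * min r 1 >= |w|]. *)
Lemma gfun_center_lt_pinfty : (g w < +oo)%E.
Proof.
set m := Num.min r 1; have m0 : 0 < m by rewrite lt_min r_gt0 ltr01.
set k := Num.bound (tnorm w / m).
have wk : tnorm w <= k%:R * m.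
  by rewrite -ler_pdivrMr // ltW // archi_boundP // divr_ge0 ?tnorm_ge0 ?ltW.
set C := 1 + `|a1| ^+ k + nu r.
have C0 : 0 <= C by rewrite !addr_ge0 ?exprn_ge0 ?nu_ge0.
have dens_min0 z : (0 <= (f z * Num.min (levy_dens nu z) 1)%:E)%E.
  by rewrite lee_fin mulr_ge0 // le_min levy_dens_ge0 ler01.
apply: le_lt_trans (_ : (lebint (fun z => C%:E * (f z * Num.min (levy_dens nu z) 1)%:E)
  < +oo)%E); last first.
  by apply: le_lt_trans (lebintZl_le C0 dens_min0) _; rewrite lte_mul_pinfty.
apply: le_lebint_but0 => [|z|z z0]; [exact: gfun_integrand_ge0 | by rewrite mule_ge0 |].
case: asboolP => zw; first by rewrite mule_ge0.
have rs : r <= tnorm (tsub w z).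
  by rewrite tnorm_subC leNgt; apply/negP.
have z_gt0 : 0 < tnorm z.
  rewrite lt_neqAle tnorm_ge0 andbT; apply: contra z0 => /eqP z_eq0.
  by rewrite (tnorm_eq0 (esym z_eq0)).
have zs : tnorm z <= tnorm (tsub w z) + k%:R * m.
  have := tnorm_sub_le z w (tzero R n.+1); rewrite !tsubr0 tnorm_subC; lra.
rewrite (levy_densE (lt_le_trans r_gt0 rs)) (levy_densE z_gt0) -EFinM lee_fin.
by rewrite mulrCA ler_wpM2l // nu_le_far.
Qed.

Lemma gfun_fin_num x : eball w (r / 2) x -> g x \is a fin_num.
Proof.
move=> xw; rewrite ge0_fin_numE ?gfun_ge0 //.
apply: le_lt_trans (gfun_le_near xw center_in_half_ball _) _.
  by have := xw; rewrite /eball /=; lra.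
rewrite lte_mul_pinfty ?gfun_center_lt_pinfty // lee_fin.
by rewrite addr_ge0 // divr_ge0 ?mulr_ge0 ?tnorm_ge0 ?(ltW r_gt0).
Qed.

Lemma fine_gfun_compare y : eball w (r / 2) y ->
  [/\ 0 <= tnorm (tsub y w) / r <= 1 / 2,
      fine (g w) <= (1 + K * (tnorm (tsub y w) / r)) * fine (g y) &
      fine (g y) <= (1 + K * (tnorm (tsub y w) / r)) * fine (g w)].
Proof.
move=> yw; have yw_le : tnorm (tsub y w) <= r / 2 by exact: ltW.
have fine_le x1 x2 : eball w (r / 2) x1 -> eball w (r / 2) x2 ->
    tnorm (tsub x1 x2) <= r / 2 ->
    fine (g x1) <= (1 + K * (tnorm (tsub x1 x2) / r)) * fine (g x2).
  move=> x1w x2w x12; rewrite -lee_fin EFinM !fineK ?gfun_fin_num // mulrA.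
  exact: gfun_le_near.
split.
- by rewrite divr_ge0 ?tnorm_ge0 ?(ltW r_gt0) //= ler_pdivrMr //; lra.
- rewrite (tnorm_subC y w); apply: fine_le => //; first exact: center_in_half_ball.
  by rewrite tnorm_subC.
- exact: fine_le center_in_half_ball _.
Qed.

Lemma gfun_bounded : exists M : R, forall y, eball w (r / 2) y -> (g y <= M%:E)%E.
Proof.
exists ((1 + K / 2) * fine (g w)) => y yw.
have [/andP[_ t_le] _ gyw] := fine_gfun_compare yw.
rewrite -(fineK (gfun_fin_num yw)) lee_fin (le_trans gyw) // ler_wpM2r ?fine_ge0 ?gfun_ge0 //.
by rewrite lerD2l; apply: le_trans (ler_wpM2l K_ge0 t_le) _; rewrite mul1r.
Qed.

Lemma gfun_sub_le y : eball w (r / 2) y ->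
  (`| g y - g w | <= (1 + K)%:E * mine (g w) (g y) * (tnorm (tsub y w) / r)%:E)%E.
Proof.
move=> yw; have [/andP[t_ge0 _] gwy gyw] := fine_gfun_compare yw.
rewrite -(fineK (gfun_fin_num yw)) -(fineK (gfun_fin_num center_in_half_ball)).
rewrite -EFinB abse_EFin -EFin_min -!EFinM lee_fin.
have [gw0 gy0] : 0 <= fine (g w) /\ 0 <= fine (g y) by rewrite !fine_ge0 ?gfun_ge0.
apply: le_trans (normB_le_mul_min gw0 gy0 gwy gyw) _.
have min_ge0 : 0 <= Num.min (fine (g w)) (fine (g y)) by rewrite le_min gw0.
by rewrite mulrAC ler_wpM2r // ler_wpM2r // lerDr.
Qed.

Lemma gfun_center_le y : eball w (r / 2) y -> (g w <= (1 + K)%:E * g y)%E.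
Proof.
move=> yw; have [/andP[_ t_le] gwy _] := fine_gfun_compare yw.
rewrite -(fineK (gfun_fin_num yw)) -(fineK (gfun_fin_num center_in_half_ball)) -EFinM lee_fin.
rewrite (le_trans gwy) // ler_wpM2r ?fine_ge0 ?gfun_ge0 // lerD2l.
by rewrite ler_piMr //; lra.
Qed.

End JumpKernel.
End RadialProfile.

Unset Implicit Arguments.

Theorem lemma5p4 (R : realType) (d : nat) (a1 a2 : R) :
  (0 < d)%N ->
  exists c : R,
  forall (dO : measure_display) (Omega : measurableType dO)
         (P : probability Omega R) (X : R -> Omega -> d.-tuple R) (nu : R -> R),
  assumptionsA P X nu a1 a2 ->
  forall (w : d.-tuple R) (r : R), 0 < r <= 2 ->
  forall f : d.-tuple R -> R,
    measurable_fun [set: d.-tuple R] f -> (forall y, 0 <= f y) ->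
    (lebint (fun y : d.-tuple R => (f y * Num.min (levy_dens nu y) 1)%:E) < +oo)%E ->
    [/\ (exists M : R, forall y, eball w (r / 2) y -> (gfun nu f w r y <= M%:E)%E),
        (forall y, eball w (r / 2) y ->
           (`| gfun nu f w r y - gfun nu f w r w | <=
              c%:E * mine (gfun nu f w r w) (gfun nu f w r y)
                   * (tnorm (tsub y w) / r)%:E)%E) &
        (forall y, eball w (r / 2) y ->
           (gfun nu f w r w <= c%:E * gfun nu f w r y)%E)].
Proof.
case: d => [//|d] _; exists (1 + 8 * `|a1| ^+ 3).
move=> dO Omega P X nu [[[nu_ge0 _ _] _ _ _ _] [nu_nonincr [nu' [nu_int nu'_nonincr]]
  nu_shift1 nu_double] _] w r /andP[r_gt0 r_le2] f _ f_ge0 f_int.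
split; [apply: gfun_bounded | apply: gfun_sub_le | apply: gfun_center_le]; eassumption.
Qed.
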